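(* Let $(X,Y,Z,W)$ be a solution of system (S) on $(-\infty,t_{max})$. Assume $Y,W>0$, $\lim_{t\to-\infty}(X,Y,Z,W)(t)=(0,0,1,0)$, and $\mathcal C>0$. Normalize $g$ so that $\lambda=\lim_{t\to-\infty}g(t)>0$, and let $\mathcal C$ be the first-integral constant for this normalization. Then the limit $\lim_{t\to-\infty}\frac{1-Z}{Y^2}$ exists and $$\mathcal C\lambda^2=2\lim_{t\to-\infty}\frac{1-Z}{Y^2}-A_2.$$
   Context: Fix a positive integer $d$ and a real number $q$. Put $A_2=d(d+2)$ and $A_3=\tfrac14 d(d+2)^2q^2$. System (S) is $$X'=X(dX^2+Z^2-1)+\tfrac{A_2}{d}Y^2-2\tfrac{A_3}{d}W^2,\qquad Y'=Y(dX^2+Z^2-X),$$ $$Z'=Z(dX^2+Z^2-1)+A_3W^2,\qquad W'=W(dX^2+Z^2-2X+Z).$$ For a solution, $g$ is a positive solution of $g'=gX$ (unique up to a positive constant) and $\mathcal L=gY$. The first integral reads $dX^2+A_2Y^2+Z^2-A_3W^2=1-\mathcal C\mathcal L^2$ for a constant $\mathcal C$, whose sign is independent of the normalization of $g$. Under the hypotheses, $\int_{-\infty}X\,dt$ is finite, so $\lambda=\lim_{t\to-\infty}g(t)$ exists and fixes the normalization. *)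

From Stdlib Require Import Reals.
Open Scope R_scope.

(* Right endpoint of the interval (-oo, tmax): Some b means tmax = b,
   None means tmax = +oo. *)
Definition in_dom (tmax : option R) (t : R) : Prop :=
  match tmax with Some b => t < b | None => True end.

Definition lim_minf (tmax : option R) (f : R -> R) (l : R) : Prop :=
  forall eps : R, 0 < eps ->
    exists M : R, forall t : R, t < M -> in_dom tmax t -> Rabs (f t - l) < eps.

Definition A2 (d : nat) : R := INR d * (INR d + 2).
Definition A3 (d : nat) (q : R) : R := / 4 * INR d * (INR d + 2) ^ 2 * q ^ 2.

Definition solves_S (d : nat) (q : R) (tmax : option R)
    (X Y Z W : R -> R) : Prop :=
  forall t : R, in_dom tmax t ->
    derivable_pt_lim X t
      (X t * (INR d * X t ^ 2 + Z t ^ 2 - 1) + A2 d / INR d * Y t ^ 2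
        - 2 * (A3 d q / INR d) * W t ^ 2) /\
    derivable_pt_lim Y t (Y t * (INR d * X t ^ 2 + Z t ^ 2 - X t)) /\
    derivable_pt_lim Z t
      (Z t * (INR d * X t ^ 2 + Z t ^ 2 - 1) + A3 d q * W t ^ 2) /\
    derivable_pt_lim W t
      (W t * (INR d * X t ^ 2 + Z t ^ 2 - 2 * X t + Z t)).

(* Near the equilibrium (0,0,1,0) the growth rate rho = dX^2 + Z^2 - X of Y is close to 1, and
   (W^2/Y^3)' = (W^2/Y^3) (2Z - dX^2 - Z^2 - X) >= 0, so W^2 <= c Y^3 as t -> -oo.  With this, the
   barrier functions s X - K Y^2 (s = +-1, K = 3 A3 + A2 + 1) decrease wherever they are positive and
   tend to 0, hence are nonpositive: |X| <= K Y^2.  Consequently g (1 + 2 K Y^2) is nondecreasing and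
   g (1 - 2 K Y^2) is nonincreasing in t; the first is bounded below by the second, so it has a limit
   lambda > 0 at -oo, which is also the limit of g.  Finally the first integral rewrites (1 - Z) / Y^2
   as (d (X/Y)^2 + A2 + C g^2 - A3 W^2/Y^2) / (1 + Z), and X/Y, W^2/Y^2 -> 0. *)

From Stdlib Require Import Reals Lra Psatz Classical.
From Coquelicot Require Import Coquelicot.
Open Scope R_scope.

Lemma in_dom_eventually tm : Rbar_locally m_infty (in_dom tm).
Proof. destruct tm as [b|]; [exists b | exists 0]; simpl; auto. Qed.

Lemma is_lim_of_lim_minf tm f (l : R) : lim_minf tm f l -> is_lim f m_infty l.
Proof.
  intros Hf. apply is_lim_spec. intros eps.
  destruct (Hf eps (cond_pos eps)) as [M HM].
  apply (filter_imp (fun t => t < M /\ in_dom tm t)).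
  - intros t [Ht Hd]. now apply HM.
  - apply filter_and; [now exists M | apply in_dom_eventually].
Qed.

Lemma lim_minf_of_is_lim tm f (l : R) : is_lim f m_infty l -> lim_minf tm f l.
Proof.
  intros Hf eps Heps. apply is_lim_spec in Hf.
  destruct (Hf (mkposreal eps Heps)) as [M HM].
  exists M. intros t Ht _. now apply HM.
Qed.

Lemma is_lim_pow f x (l : R) n : is_lim f x l -> is_lim (fun t => f t ^ n) x (l ^ n).
Proof.
  intros Hf. induction n as [|n IH]; simpl.
  - apply is_lim_const.
  - apply (is_lim_mult _ _ _ l (l ^ n)); [assumption | assumption | exact I].
Qed.

Lemma is_lim_eventually_between f (l a b : R) :
  is_lim f m_infty l -> a < l < b -> Rbar_locally m_infty (fun t => a < f t < b).
Proof.
  intros Hf Hl. apply is_lim_spec in Hf.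
  assert (Heps : 0 < Rmin (l - a) (b - l)) by (apply Rmin_glb_lt; lra).
  apply (filter_imp (fun t => Rabs (f t - l) < Rmin (l - a) (b - l))).
  - intros t Ht. apply Rabs_def2 in Ht.
    generalize (Rmin_l (l - a) (b - l)) (Rmin_r (l - a) (b - l)). lra.
  - exact (Hf (mkposreal _ Heps)).
Qed.

Lemma is_lim_m_infty_of_nondecreasing f M m :
  (forall s t, s <= t < M -> f s <= f t) -> (forall t, t < M -> m <= f t) ->
  exists l : R, m <= l /\ is_lim f m_infty l.
Proof.
  intros Hmono Hlow.
  set (E := fun x => exists t, t < M /\ x = - f t).
  destruct (completeness E) as [u [Hub Hleast]].
  - exists (- m). intros x [t [Ht ->]]. specialize (Hlow t Ht). lra.
  - exists (- f (M - 1)), (M - 1). split; [lra | reflexivity].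
  - assert (Hinf : forall t, t < M -> - u <= f t).
    { intros t Ht. assert (- f t <= u) by (apply Hub; now exists t). lra. }
    exists (- u). split.
    + assert (u <= - m); [|lra]. apply Hleast. intros x [t [Ht ->]].
      specialize (Hlow t Ht). lra.
    + apply is_lim_spec. intros eps.
      destruct (classic (exists s, s < M /\ f s < - u + eps)) as [[s [Hs Hfs]] | Hnone].
      * exists s. intros t Ht. specialize (Hinf t ltac:(lra)).
        assert (f t <= f s) by (apply Hmono; lra).
        apply Rabs_def1; lra.
      * exfalso. assert (u <= u - eps); [|generalize (cond_pos eps); lra].
        apply Hleast. intros x [t [Ht ->]].
        apply Rnot_lt_le. intros Hlt. apply Hnone. exists t. split; [assumption | lra].
Qed.

Lemma nondecreasing_of_deriv_nonneg f f' a b : a <= b ->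
  (forall c, a <= c <= b -> derivable_pt_lim f c (f' c)) ->
  (forall c, a <= c <= b -> 0 <= f' c) -> f a <= f b.
Proof.
  intros Hab Hd Hp. destruct (Rle_lt_or_eq_dec a b Hab) as [Hlt | ->]; [|lra].
  destruct (MVT_cor2 f f' a b Hlt Hd) as [c [Hfc Hc]].
  assert (0 <= f' c) by (apply Hp; lra). nra.
Qed.

Lemma nonincreasing_of_deriv_nonpos f f' a b : a <= b ->
  (forall c, a <= c <= b -> derivable_pt_lim f c (f' c)) ->
  (forall c, a <= c <= b -> f' c <= 0) -> f b <= f a.
Proof.
  intros Hab Hd Hn.
  assert (H : - f a <= - f b); [|lra].
  apply (nondecreasing_of_deriv_nonneg (fun u => - f u) (fun u => - f' u)); [assumption| |].
  - intros c Hc. apply (derivable_pt_lim_opp f), Hd, Hc.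
  - intros c Hc. specialize (Hn c Hc). lra.
Qed.

Lemma derivable_pt_lim_neg_gt_left f x l : derivable_pt_lim f x l -> l < 0 ->
  exists del, 0 < del /\ forall h, 0 < h < del -> f x < f (x - h).
Proof.
  intros Hf Hl. destruct (Hf (- l / 2) ltac:(lra)) as [del Hdel].
  exists del. split; [apply cond_pos|]. intros h Hh.
  assert (Hq : Rabs ((f (x + - h) - f x) / - h - l) < - l / 2).
  { apply Hdel; [lra|]. rewrite Rabs_Ropp, Rabs_pos_eq; lra. }
  apply Rabs_def2 in Hq. destruct Hq as [Hq _].
  replace (x - h) with (x + - h) by ring.
  assert (E : f (x + - h) - f x = (f (x + - h) - f x) / - h * - h) by (field; lra).
  nra.
Qed.

Lemma nonpos_of_deriv_neg_where_pos F F' M :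
  (forall t, t < M -> derivable_pt_lim F t (F' t)) ->
  (forall t, t < M -> 0 < F t -> F' t < 0) ->
  is_lim F m_infty 0 -> forall t, t < M -> F t <= 0.
Proof.
  intros Hd Hneg Hlim t1 Ht1. apply Rnot_lt_le. intros Hpos.
  apply is_lim_spec in Hlim. destruct (Hlim (mkposreal _ Hpos)) as [N HN]. simpl in HN.
  set (t0 := Rmin N t1 - 1).
  assert (Ht0 : t0 < t1) by (unfold t0; generalize (Rmin_r N t1); lra).
  assert (HFt0 : F t0 < F t1).
  { assert (H := HN t0 ltac:(unfold t0; generalize (Rmin_l N t1); lra)).
    rewrite Rminus_0_r in H. apply Rabs_def2 in H. lra. }
  destruct (continuity_ab_maj F t0 t1) as [m [Hmax Hm]]; [lra| |].
  { intros c Hc. apply (derivable_continuous_pt F c). exists (F' c). apply Hd. lra. }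
  assert (Hm0 : t0 < m).
  { destruct (proj1 Hm) as [|<-]; [assumption|]. specialize (Hmax t1 ltac:(lra)). lra. }
  assert (HFm : F t1 <= F m) by (apply Hmax; lra).
  destruct (derivable_pt_lim_neg_gt_left F m (F' m)) as [del [Hdel Hgt]];
    [apply Hd; lra | apply Hneg; lra |].
  set (h := Rmin (del / 2) (m - t0)).
  assert (Hh : 0 < h <= m - t0 /\ h < del).
  { unfold h. split; [split|].
    - apply Rmin_glb_lt; lra.
    - apply Rmin_r.
    - generalize (Rmin_l (del / 2) (m - t0)). lra. }
  assert (Hup : F (m - h) <= F m) by (apply Hmax; lra).
  specialize (Hgt h ltac:(lra)). lra.
Qed.

Lemma barrier_slope_neg D a2 a3 c s x y z w :
  1 <= D -> a2 = D * (D + 2) -> 0 <= a3 -> 0 <= c -> -1 <= s <= 1 -> 0 < y ->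
  -1 <= x <= 1 -> w ^ 2 <= y ^ 2 -> 1 / 2 <= D * x ^ 2 + z ^ 2 - x ->
  D * x ^ 2 + z ^ 2 - 1 = a3 * w ^ 2 - (a2 + c) * y ^ 2 ->
  (3 * a3 + a2 + 1) * y ^ 2 < s * x ->
  s * (x * (D * x ^ 2 + z ^ 2 - 1) + a2 / D * y ^ 2 - 2 * (a3 / D) * w ^ 2)
    - 2 * (3 * a3 + a2 + 1) * y ^ 2 * (D * x ^ 2 + z ^ 2 - x) < 0.
Proof.
  intros HD Ha2 Ha3 Hc Hs Hy Hx Hw Hrho Hfi Hsx.
  assert (Hy2 : 0 < y ^ 2) by nra.
  assert (Hw2 : 0 <= w ^ 2) by nra.
  assert (Hsx0 : 0 < s * x) by nra.
  assert (Hsx1 : s * x <= 1) by nra.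
  assert (Hlin : s * x * (D * x ^ 2 + z ^ 2 - 1) <= a3 * y ^ 2).
  { assert (Ha2pos : 0 <= a2) by (subst; nra).
    assert (0 <= s * x * ((a2 + c) * y ^ 2)) by (apply Rmult_le_pos; nra).
    assert (s * x * (a3 * w ^ 2) <= a3 * w ^ 2) by (apply (Rmult_le_compat_r (a3 * w ^ 2)) in Hsx1; nra).
    rewrite Hfi. nra. }
  assert (Hquad : s * (a2 / D * y ^ 2) <= a2 * y ^ 2).
  { replace (a2 / D) with (D + 2) by (subst; field; lra).
    assert (0 <= (1 - s) * ((D + 2) * y ^ 2)) by (apply Rmult_le_pos; nra).
    assert (0 <= (D - 1) * ((D + 2) * y ^ 2)) by (apply Rmult_le_pos; nra).
    subst. nra. }
  assert (HwW : - s * (2 * (a3 / D) * w ^ 2) <= 2 * a3 * y ^ 2).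
  { assert (Ha3D : 0 <= a3 / D <= a3).
    { split; [unfold Rdiv; apply Rmult_le_pos; [lra | apply Rlt_le, Rinv_0_lt_compat; lra]|].
      apply (Rmult_le_reg_r D); [lra|]. unfold Rdiv. rewrite Rmult_assoc, Rinv_l; nra. }
    assert (0 <= (1 + s) * (2 * (a3 / D) * w ^ 2)) by (apply Rmult_le_pos; nra).
    assert (0 <= (a3 - a3 / D) * w ^ 2) by (apply Rmult_le_pos; lra).
    assert (0 <= a3 * (y ^ 2 - w ^ 2)) by (apply Rmult_le_pos; lra).
    nra. }
  assert (Hrho2 : 0 <= (3 * a3 + a2 + 1) * y ^ 2 * (2 * (D * x ^ 2 + z ^ 2 - x) - 1)).
  { apply Rmult_le_pos; [|lra]. apply Rmult_le_pos; [subst; nra | lra]. }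
  assert (E : forall A B Cw, s * (A + B - Cw) = s * A + s * B + - s * Cw) by (intros; ring).
  rewrite E, <- Rmult_assoc. lra.
Qed.

Section Proposition_2_3.

Variables (d : nat) (q : R) (tmax : option R) (X Y Z W g : R -> R) (C : R).

Hypothesis d_ge1 : (1 <= d)%nat.
Hypothesis sol : solves_S d q tmax X Y Z W.
Hypothesis YW_pos : forall t, in_dom tmax t -> 0 < Y t /\ 0 < W t.
Hypothesis X_lim : is_lim X m_infty 0.
Hypothesis Y_lim : is_lim Y m_infty 0.
Hypothesis Z_lim : is_lim Z m_infty 1.
Hypothesis g_sol : forall t, in_dom tmax t -> 0 < g t /\ derivable_pt_lim g t (g t * X t).
Hypothesis first_integral : forall t, in_dom tmax t ->
  INR d * X t ^ 2 + A2 d * Y t ^ 2 + Z t ^ 2 - A3 d q * W t ^ 2 = 1 - C * (g t * Y t) ^ 2.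
Hypothesis C_pos : 0 < C.

Let D := INR d.
Let rho t := D * X t ^ 2 + Z t ^ 2 - X t.
Let K := 3 * A3 d q + A2 d + 1.

Lemma D_ge1 : 1 <= D.
Proof. change 1 with (INR 1). apply le_INR. exact d_ge1. Qed.

Lemma A3_nonneg : 0 <= A3 d q.
Proof.
  unfold A3. assert (HD := D_ge1).
  apply Rmult_le_pos; [|apply pow2_ge_0]. apply Rmult_le_pos; [|apply pow2_ge_0]. fold D. lra.
Qed.

Lemma K_pos : 0 < K.
Proof. assert (HD := D_ge1). assert (H3 := A3_nonneg). unfold K, A2. fold D. nra. Qed.

Lemma first_integral_eq t : in_dom tmax t ->
  D * X t ^ 2 + Z t ^ 2 - 1 = A3 d q * W t ^ 2 - (A2 d + C * g t ^ 2) * Y t ^ 2.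
Proof.
  intros Ht. assert (H := first_integral t Ht).
  replace ((g t * Y t) ^ 2) with (g t ^ 2 * Y t ^ 2) in H by ring. unfold D. lra.
Qed.

Lemma Y_deriv t : in_dom tmax t -> derivable_pt_lim Y t (Y t * rho t).
Proof. intros Ht. apply (sol t Ht). Qed.

Lemma X_deriv t : in_dom tmax t -> derivable_pt_lim X t
  (X t * (D * X t ^ 2 + Z t ^ 2 - 1) + A2 d / D * Y t ^ 2 - 2 * (A3 d q / D) * W t ^ 2).
Proof. intros Ht. apply (sol t Ht). Qed.

Lemma W2_div_Y3_deriv t : in_dom tmax t ->
  derivable_pt_lim (fun u => W u ^ 2 / Y u ^ 3) t
    (W t ^ 2 / Y t ^ 3 * (2 * Z t - D * X t ^ 2 - Z t ^ 2 - X t)).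
Proof.
  intros Ht. destruct (sol t Ht) as (_ & HY & _ & HW). destruct (YW_pos t Ht) as [HYp HWp].
  apply is_derive_Reals in HY, HW. apply is_derive_Reals.
  replace (W t ^ 2 / Y t ^ 3 * (2 * Z t - D * X t ^ 2 - Z t ^ 2 - X t)) with
    ((INR 2 * (W t * (D * X t ^ 2 + Z t ^ 2 - 2 * X t + Z t)) * W t ^ 1 * Y t ^ 3
      - W t ^ 2 * (INR 3 * (Y t * (D * X t ^ 2 + Z t ^ 2 - X t)) * Y t ^ 2)) / (Y t ^ 3) ^ 2)
    by (simpl; field; lra).
  apply is_derive_div; [apply is_derive_pow, HW | apply is_derive_pow, HY | apply pow_nonzero; lra].
Qed.

Lemma eventually_near_equilibrium : Rbar_locally m_infty (fun t =>
  in_dom tmax t /\ -1 < X t < 1 /\ 1 / 2 < rho t /\ 0 < 2 * Z t - D * X t ^ 2 - Z t ^ 2 - X t).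
Proof.
  assert (HX2 : is_lim (fun t => D * X t ^ 2) m_infty (D * 0 ^ 2)).
  { apply (is_lim_scal_l _ D _ (0 ^ 2)). now apply is_lim_pow. }
  assert (HZ2 := is_lim_pow _ _ _ 2 Z_lim).
  apply filter_and; [apply in_dom_eventually|]. apply filter_and; [|apply filter_and].
  - apply (is_lim_eventually_between _ 0); [assumption | lra].
  - apply (filter_imp (fun t => 1 / 2 < rho t < 2)); [tauto|].
    apply (is_lim_eventually_between _ (D * 0 ^ 2 + 1 ^ 2 - 0)); [|simpl; lra].
    apply is_lim_minus'; [apply is_lim_plus'|]; assumption.
  - apply (filter_imp (fun t => 0 < 2 * Z t - D * X t ^ 2 - Z t ^ 2 - X t < 2)); [tauto|].
    apply (is_lim_eventually_between _ (2 * 1 - D * 0 ^ 2 - 1 ^ 2 - 0)); [|simpl; lra].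
    apply is_lim_minus'; [apply is_lim_minus'; [apply is_lim_minus'|]|]; try assumption.
    apply (is_lim_scal_l _ 2 _ 1). assumption.
Qed.

Lemma W2_le_Y3 : exists c, 0 < c /\ Rbar_locally m_infty (fun t => W t ^ 2 <= c * Y t ^ 3).
Proof.
  destruct eventually_near_equilibrium as [M HM].
  set (h u := W u ^ 2 / Y u ^ 3).
  assert (Hpos : forall t, t < M -> 0 < Y t /\ 0 < h t).
  { intros t Ht. destruct (YW_pos t (proj1 (HM t Ht))) as [HY HW].
    split; [assumption|]. apply Rdiv_lt_0_compat; apply pow_lt; assumption. }
  exists (h (M - 1)). split; [apply Hpos; lra|]. exists (M - 1). intros t Ht.
  assert (Hh : h t <= h (M - 1)).
  { apply (nondecreasing_of_deriv_nonneg h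
      (fun u => h u * (2 * Z u - D * X u ^ 2 - Z u ^ 2 - X u))); [lra| |].
    - intros u Hu. apply W2_div_Y3_deriv, HM. lra.
    - intros u Hu. destruct (HM u ltac:(lra)) as (_ & _ & _ & Hgrow).
      apply Rmult_le_pos; [apply Rlt_le, Hpos|]; lra. }
  assert (HYt : 0 < Y t) by (apply Hpos; lra).
  assert (HY3 : 0 < Y t ^ 3) by (apply pow_lt; lra).
  apply (Rmult_le_compat_r (Y t ^ 3)) in Hh; [|lra].
  replace (h t * Y t ^ 3) with (W t ^ 2) in Hh by (unfold h; field; lra).
  lra.
Qed.

Lemma eventually_W2_le_Y2 : Rbar_locally m_infty (fun t => W t ^ 2 <= Y t ^ 2).
Proof.
  destruct W2_le_Y3 as [c [Hc HW]].
  assert (HY : Rbar_locally m_infty (fun t => -1 < Y t < / c)).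
  { apply (is_lim_eventually_between _ 0); [assumption|].
    split; [lra | apply Rinv_0_lt_compat; lra]. }
  apply (filter_imp (fun t => W t ^ 2 <= c * Y t ^ 3 /\ -1 < Y t < / c));
    [|now apply filter_and].
  intros t [HWt [_ HYt]].
  assert (HcY : c * Y t <= 1).
  { apply (Rmult_lt_compat_l c) in HYt; [|assumption]. rewrite Rinv_r in HYt; lra. }
  assert (HY2 : 0 <= Y t ^ 2) by apply pow2_ge_0.
  replace (Y t ^ 3) with (Y t * Y t ^ 2) in HWt by ring. nra.
Qed.

Lemma barrier_deriv s t : in_dom tmax t ->
  derivable_pt_lim (fun u => s * X u - K * Y u ^ 2) t
    (s * (X t * (D * X t ^ 2 + Z t ^ 2 - 1) + A2 d / D * Y t ^ 2 - 2 * (A3 d q / D) * W t ^ 2)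
      - 2 * K * Y t ^ 2 * rho t).
Proof.
  intros Ht.
  replace (2 * K * Y t ^ 2 * rho t) with (K * (INR 2 * (Y t * rho t) * Y t ^ 1)) by (simpl; ring).
  apply (derivable_pt_lim_minus (fun u => s * X u) (fun u => K * Y u ^ 2));
    apply is_derive_Reals, is_derive_scal.
  - apply is_derive_Reals, X_deriv, Ht.
  - apply is_derive_pow, is_derive_Reals, Y_deriv, Ht.
Qed.

Lemma X_between_KY2 : Rbar_locally m_infty (fun t => - (K * Y t ^ 2) <= X t <= K * Y t ^ 2).
Proof.
  destruct (filter_and _ _ eventually_near_equilibrium eventually_W2_le_Y2) as [M HM].
  assert (Hbarrier : forall s, -1 <= s <= 1 -> forall t, t < M -> s * X t - K * Y t ^ 2 <= 0).
  { intros s Hs. apply (nonpos_of_deriv_neg_where_pos _ (fun t =>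
      s * (X t * (D * X t ^ 2 + Z t ^ 2 - 1) + A2 d / D * Y t ^ 2 - 2 * (A3 d q / D) * W t ^ 2)
        - 2 * K * Y t ^ 2 * rho t)).
    - intros t Ht. apply barrier_deriv, HM, Ht.
    - intros t Ht Hpos. destruct (HM t Ht) as [(Hd & HX & Hrho & _) HWY].
      destruct (YW_pos t Hd) as [HY _].
      unfold K, rho in *. apply (barrier_slope_neg D (A2 d) (A3 d q) (C * g t ^ 2));
        try solve [lra | reflexivity | apply D_ge1 | apply A3_nonneg | now apply first_integral_eq].
      apply Rmult_le_pos; [lra | apply pow2_ge_0].
    - assert (Hlim : is_lim (fun u => s * X u - K * Y u ^ 2) m_infty (s * 0 - K * 0 ^ 2)).
      { apply is_lim_minus'; [apply (is_lim_scal_l _ s _ 0) | apply (is_lim_scal_l _ K _ (0 ^ 2))].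
        - assumption.
        - now apply is_lim_pow. }
      replace (s * 0 - K * 0 ^ 2) with 0 in Hlim by ring. exact Hlim. }
  exists M. intros t Ht.
  assert (H1 := Hbarrier 1 ltac:(lra) t Ht). assert (H2 := Hbarrier (-1) ltac:(lra) t Ht). lra.
Qed.

Let gw s u := g u * (1 + s * (2 * K * Y u ^ 2)).

Lemma weighted_g_deriv s t : in_dom tmax t ->
  derivable_pt_lim (gw s) t
    (g t * (X t * (1 + s * (2 * K * Y t ^ 2)) + s * (4 * K * Y t ^ 2 * rho t))).
Proof.
  intros Ht.
  replace (g t * (X t * (1 + s * (2 * K * Y t ^ 2)) + s * (4 * K * Y t ^ 2 * rho t))) with
    (g t * X t * (1 + s * (2 * K * Y t ^ 2)) + g t * (0 + s * (2 * K * (INR 2 * (Y t * rho t) * Y t ^ 1))))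
    by (simpl; ring).
  apply (derivable_pt_lim_mult g (fun u => 1 + s * (2 * K * Y u ^ 2))); [apply g_sol, Ht|].
  apply (derivable_pt_lim_plus (fun _ => 1) (fun u => s * (2 * K * Y u ^ 2))).
  - apply derivable_pt_lim_const.
  - apply is_derive_Reals, is_derive_scal, is_derive_scal, is_derive_pow, is_derive_Reals, Y_deriv, Ht.
Qed.

Lemma weighted_g_monotone : exists M,
  (forall s, s = 1 \/ s = -1 -> forall a b, a <= b < M -> s * gw s a <= s * gw s b) /\
  (forall t, t < M -> 0 < gw (-1) t /\ gw (-1) t <= g t <= gw 1 t).
Proof.
  assert (HKY : is_lim (fun t => 2 * K * Y t ^ 2) m_infty (2 * K * 0 ^ 2)).
  { apply (is_lim_scal_l _ (2 * K) _ (0 ^ 2)). now apply is_lim_pow. }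
  apply (is_lim_eventually_between _ _ (-1) (1 / 2)) in HKY; [|simpl; lra].
  destruct (filter_and _ _ eventually_near_equilibrium (filter_and _ _ X_between_KY2 HKY))
    as [M HM].
  exists M. split.
  - intros s Hs a b Hab. assert (Hss : s * s = 1) by (destruct Hs; subst; ring).
    apply (nondecreasing_of_deriv_nonneg (fun u => s * gw s u) (fun t =>
      s * (g t * (X t * (1 + s * (2 * K * Y t ^ 2)) + s * (4 * K * Y t ^ 2 * rho t))))); [lra| |].
    + intros c Hc. apply derivable_pt_lim_scal, weighted_g_deriv, HM. lra.
    + intros c Hc. destruct (HM c ltac:(lra)) as [(Hd & _ & Hrho & _) [HX HKYc]].
      assert (Hg := proj1 (g_sol c Hd)).
      assert (Hsu : -1 / 2 <= s * (2 * K * Y c ^ 2) <= 1 / 2) by (destruct Hs; subst; lra).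
      assert (0 <= (s * X c + K * Y c ^ 2) * (1 + s * (2 * K * Y c ^ 2))).
      { apply Rmult_le_pos; [destruct Hs; subst; lra | lra]. }
      assert (0 <= K * Y c ^ 2 * (2 * rho c - 1)) by (apply Rmult_le_pos; lra).
      assert (0 <= K * Y c ^ 2 * (1 - s * (2 * K * Y c ^ 2))) by (apply Rmult_le_pos; lra).
      replace (s * (g c * (X c * (1 + s * (2 * K * Y c ^ 2)) + s * (4 * K * Y c ^ 2 * rho c))))
        with (g c * (s * X c * (1 + s * (2 * K * Y c ^ 2)) + (s * s) * (4 * K * Y c ^ 2 * rho c)))
        by ring.
      rewrite Hss. apply Rmult_le_pos; nra.
  - intros t Ht. destruct (HM t Ht) as [(Hd & _) [HX HKYt]].
    assert (Hg := proj1 (g_sol t Hd)). unfold gw. split; [|split]; nra.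
Qed.

Lemma g_converges : exists lam : R, 0 < lam /\ is_lim g m_infty lam.
Proof.
  destruct weighted_g_monotone as [M [Hmono Hsandwich]].
  destruct (is_lim_m_infty_of_nondecreasing (gw 1) (M - 1) (gw (-1) (M - 1))) as [lam [Hlam Hlim]].
  - intros a b Hab. assert (H := Hmono 1 (or_introl eq_refl) a b ltac:(lra)). lra.
  - intros t Ht. assert (H := Hmono (-1) (or_intror eq_refl) t (M - 1) ltac:(lra)).
    destruct (Hsandwich t ltac:(lra)). lra.
  - exists lam. split; [destruct (Hsandwich (M - 1) ltac:(lra)); lra|].
    assert (HK := K_pos).
    assert (Hdiv : is_lim (fun u => gw 1 u / (1 + 1 * (2 * K * Y u ^ 2))) m_infty
                     (lam / (1 + 1 * (2 * K * 0 ^ 2)))).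
    { apply (is_lim_div _ _ _ lam (1 + 1 * (2 * K * 0 ^ 2))); [assumption| |simpl; injection; lra | exact I].
      apply (is_lim_plus' _ _ _ 1); [apply is_lim_const|].
      apply (is_lim_scal_l _ 1 _ (2 * K * 0 ^ 2)), (is_lim_scal_l _ (2 * K) _ (0 ^ 2)).
      now apply is_lim_pow. }
    replace (lam / (1 + 1 * (2 * K * 0 ^ 2))) with lam in Hdiv by (field; lra).
    refine (is_lim_ext _ g _ _ _ Hdiv).
    intros u. unfold gw. field.
    assert (0 <= Y u ^ 2) by apply pow2_ge_0. nra.
Qed.

Lemma X_div_Y_lim : is_lim (fun t => X t / Y t) m_infty 0.
Proof.
  apply (is_lim_le_le_loc (fun t => - K * Y t) (fun t => K * Y t)).
  - apply (filter_imp (fun t => (- (K * Y t ^ 2) <= X t <= K * Y t ^ 2) /\ in_dom tmax t));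
      [|apply filter_and; [apply X_between_KY2 | apply in_dom_eventually]].
    intros t [HX Hd]. destruct (YW_pos t Hd) as [HY _].
    split; apply (Rmult_le_reg_r (Y t)); try assumption;
      unfold Rdiv; rewrite ?Rmult_assoc, ?Rinv_l; simpl in *; nra.
  - replace (Finite 0) with (Finite (- K * 0)) by (f_equal; ring).
    now apply (is_lim_scal_l _ (- K) _ 0).
  - replace (Finite 0) with (Finite (K * 0)) by (f_equal; ring).
    now apply (is_lim_scal_l _ K _ 0).
Qed.

Lemma W2_div_Y2_lim : is_lim (fun t => W t ^ 2 / Y t ^ 2) m_infty 0.
Proof.
  destruct W2_le_Y3 as [c [Hc HW]].
  apply (is_lim_le_le_loc (fun _ => 0) (fun t => c * Y t)).
  - apply (filter_imp (fun t => W t ^ 2 <= c * Y t ^ 3 /\ in_dom tmax t));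
      [|now apply filter_and; [|apply in_dom_eventually]].
    intros t [HWt Hd]. destruct (YW_pos t Hd) as [HY _].
    assert (HY2 : 0 < Y t ^ 2) by (apply pow_lt; lra).
    split.
    + apply Rmult_le_pos; [apply pow2_ge_0 | apply Rlt_le, Rinv_0_lt_compat, HY2].
    + apply (Rmult_le_reg_r (Y t ^ 2)); [assumption|].
      unfold Rdiv. rewrite Rmult_assoc, Rinv_l by lra.
      replace (c * Y t * Y t ^ 2) with (c * Y t ^ 3) by ring. lra.
  - apply is_lim_const.
  - replace (Finite 0) with (Finite (c * 0)) by (f_equal; ring).
    now apply (is_lim_scal_l _ c _ 0).
Qed.

Lemma ratio_converges (lam : R) : is_lim g m_infty lam ->
  is_lim (fun t => (1 - Z t) / Y t ^ 2) m_infty ((A2 d + C * lam ^ 2) / 2).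
Proof.
  intros Hg.
  assert (Hlim : is_lim (fun t =>
      (D * (X t / Y t) ^ 2 + A2 d + C * g t ^ 2 - A3 d q * (W t ^ 2 / Y t ^ 2)) / (1 + Z t))
      m_infty ((D * 0 ^ 2 + A2 d + C * lam ^ 2 - A3 d q * 0) / (1 + 1))).
  { apply (is_lim_div _ _ _ (D * 0 ^ 2 + A2 d + C * lam ^ 2 - A3 d q * 0) (1 + 1));
      [| |simpl; injection; lra | exact I].
    - apply is_lim_minus'; [apply is_lim_plus'; [apply is_lim_plus'|]|].
      + apply (is_lim_scal_l _ D _ (0 ^ 2)), is_lim_pow, X_div_Y_lim.
      + apply is_lim_const.
      + apply (is_lim_scal_l _ C _ (lam ^ 2)). now apply is_lim_pow.
      + apply (is_lim_scal_l _ (A3 d q) _ 0), W2_div_Y2_lim.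
    - apply is_lim_plus'; [apply is_lim_const | assumption]. }
  replace ((D * 0 ^ 2 + A2 d + C * lam ^ 2 - A3 d q * 0) / (1 + 1)) with
    ((A2 d + C * lam ^ 2) / 2) in Hlim by field.
  refine (is_lim_ext_loc _ _ _ _ _ Hlim).
  apply (filter_imp (fun t => in_dom tmax t /\ 0 < Z t < 2));
    [|apply filter_and; [apply in_dom_eventually | apply (is_lim_eventually_between _ 1); [assumption | lra]]].
  intros t [Hd HZ]. destruct (YW_pos t Hd) as [HY _].
  assert (Hfi := first_integral_eq t Hd).
  replace (1 - Z t) with ((1 - Z t ^ 2) / (1 + Z t)) by (field; lra).
  replace (1 - Z t ^ 2) with
    (D * X t ^ 2 + A2 d * Y t ^ 2 + C * g t ^ 2 * Y t ^ 2 - A3 d q * W t ^ 2) by lra.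
  field. lra.
Qed.

End Proposition_2_3.

Theorem proposition2p3 (d : nat) (q : R) (tmax : option R)
    (X Y Z W g : R -> R) (C : R) :
  (1 <= d)%nat ->
  solves_S d q tmax X Y Z W ->
  (forall t, in_dom tmax t -> 0 < Y t /\ 0 < W t) ->
  lim_minf tmax X 0 -> lim_minf tmax Y 0 ->
  lim_minf tmax Z 1 -> lim_minf tmax W 0 ->
  (forall t, in_dom tmax t -> 0 < g t /\ derivable_pt_lim g t (g t * X t)) ->
  (forall t, in_dom tmax t ->
     INR d * X t ^ 2 + A2 d * Y t ^ 2 + Z t ^ 2 - A3 d q * W t ^ 2
       = 1 - C * (g t * Y t) ^ 2) ->
  0 < C ->
  exists lambda l : R,
    0 < lambda /\ lim_minf tmax g lambda /\
    lim_minf tmax (fun t => (1 - Z t) / Y t ^ 2) l /\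
    C * lambda ^ 2 = 2 * l - A2 d.
Proof.
  intros Hd HS HYW HX HY HZ _ Hg HFI HC.
  apply is_lim_of_lim_minf in HX, HY, HZ.
  edestruct g_converges as [lam [Hlam Hglim]]; eauto.
  exists lam, ((A2 d + C * lam ^ 2) / 2).
  split; [assumption|]. split; [now apply lim_minf_of_is_lim|]. split.
  - apply lim_minf_of_is_lim. eapply ratio_converges; eauto.
  - field.
Qed.
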